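(* Let $K_1,K_2$ be simplicial complexes on $[m]$, $W=K_1\cap K_2$, $Z\subset W$ with $\varnothing\notin Z$ and $O_{K_1\cup K_2}(Z)\subset W$, and $K=K_1\#^ZK_2=\operatorname{Del}_Z(K_1\cup K_2)$. Let $\mathcal I_Z\subset\mathbb Z[K_1\cup K_2]$ be the ideal generated by $x_\sigma$, $\sigma\in Z$. Let $B$ be an integer $r\times m$ matrix of rank $r$, $u_i=\sum_jB_{ij}x_j$, $S=\mathbb Z[u_1,\dots,u_r]$, with $\mathbb Z$ an $S$-module via $u_i\mapsto0$. If $\operatorname{Tor}_1^S(\mathbb Z[K_1],\mathbb Z)=\operatorname{Tor}_1^S(\mathbb Z[K_2],\mathbb Z)=\operatorname{Tor}_1^S(\mathbb Z[K],\mathbb Z)=\operatorname{Tor}_1^S(\mathbb Z[W],\mathbb Z)=0$, then $$\operatorname{Tor}_0^S(\mathbb Z[K],\mathbb Z)\cong\operatorname{Tor}_0^S(\mathbb Z[K_1],\mathbb Z)\ \#^{\operatorname{Tor}_0^S(\mathcal I_Z,\mathbb Z)}_{\operatorname{Tor}_0^S(\mathbb Z[W],\mathbb Z)}\ \operatorname{Tor}_0^S(\mathbb Z[K_2],\mathbb Z),$$ where the maps $\operatorname{Tor}_0^S(\mathbb Z[K_i],\mathbb Z)\to\operatorname{Tor}_0^S(\mathbb Z[W],\mathbb Z)$ are induced by the natural quotient maps and $\operatorname{Tor}_0^S(\mathcal I_Z,\mathbb Z)\to\operatorname{Tor}_0^S(\mathbb Z[K_i],\mathbb Z)$ by $\mathcal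 I_Z\subset\mathbb Z[K_1\cup K_2]\to\mathbb Z[K_i]$.
   Context: $\mathbb Z[K]=\mathbb Z[x_1,\dots,x_m]/\langle x_\sigma:\sigma\notin K\rangle$ is the Stanley–Reisner ring, $x_\sigma=\prod_{i\in\sigma}x_i$. $O_K(Z)=\{\sigma\in K:\sigma\supseteq\tau$ for some $\tau\in Z\}$, $\operatorname{Del}_Z(K)=K\setminus O_K(Z)$. Connected sum of rings: given ring maps $\epsilon_A:A\to C$, $\epsilon_B:B\to C$, a $C$-module $V$ and module maps $\iota_A:V\to A$, $\iota_B:V\to B$ with $\epsilon_A\iota_A=\epsilon_B\iota_B$, $A\#_C^VB:=(A\times_CB)/\{(\iota_A(v),\iota_B(v)):v\in V\}$ with $A\times_CB=\{(a,b):\epsilon_A(a)=\epsilon_B(b)\}$. *)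

From HB Require Import structures.
From mathcomp Require Import all_boot all_order all_algebra.
From mathcomp Require Import mpoly.
Set Implicit Arguments. Unset Strict Implicit. Unset Printing Implicit Defensive.
Import GRing.Theory.
Local Open Scope ring_scope.

Notation Poly m := {mpoly int[m]}.

(* simplicial complex on [m] (ghost vertices allowed): nonempty, closed under subsets *)
Definition is_simplicial_complex m (K : {set {set 'I_m}}) : Prop :=
  set0 \in K /\ forall s t : {set 'I_m}, s \in K -> t \subset s -> t \in K.

Definition Ostar m (K Z : {set {set 'I_m}}) : {set {set 'I_m}} :=
  [set s in K | [exists t in Z, t \subset s]].
Definition Del m (Z K : {set {set 'I_m}}) : {set {set 'I_m}} := K :\: Ostar K Z.

Definition xmon m (s : {set 'I_m}) : Poly m := \prod_(i in s) 'X_i.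

Definition ideal_gen m (G : Poly m -> Prop) (p : Poly m) : Prop :=
  exists s : seq (Poly m * Poly m),
    (forall c, c \in s -> G c.2) /\ p = \sum_(c <- s) c.1 * c.2.

Definition ideal_add m (I J : Poly m -> Prop) (p : Poly m) : Prop :=
  exists a b, I a /\ J b /\ p = a + b.

(* Stanley--Reisner ideal I_K, so that Z[K] = Poly m / SR_ideal K *)
Definition SR_ideal m (K : {set {set 'I_m}}) : Poly m -> Prop :=
  ideal_gen (fun p => exists s, s \notin K /\ p = xmon s).

(* ideal generated by x_sigma, sigma in Z (its image in Z[L] is I_Z) *)
Definition mon_ideal m (Z : {set {set 'I_m}}) : Poly m -> Prop :=
  ideal_gen (fun p => exists s, s \in Z /\ p = xmon s).

Definition ulin r m (B : 'M[int]_(r, m)) (i : 'I_r) : Poly m :=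
  \sum_(j < m) (B i j)%:MP * 'X_j.

Definition U_ideal r m (B : 'M[int]_(r, m)) : Poly m -> Prop :=
  ideal_gen (fun p => exists i, p = ulin B i).

(* Tor_1^S(Poly m / I, Z) = 0, computed with the Koszul resolution
   ... -> S (x) Lambda^2 S^r -> S^r -> S -> Z of Z over S = Z[u_1..u_r]
   (a free resolution since u_1..u_r are algebraically independent when
   rank B = r).  H_1 of (Poly m / I) (x)_S Koszul vanishes iff every Koszul
   1-cycle is a boundary.  Elements of M (x) Lambda^2 S^r are represented by
   antisymmetric families a i j of representatives. *)
Definition Tor1_vanishes r m (B : 'M[int]_(r, m)) (I : Poly m -> Prop) : Prop :=
  forall c : 'I_r -> Poly m,
    I (\sum_(i < r) ulin B i * c i) ->
    exists a : 'I_r -> 'I_r -> Poly m,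
      (forall i j, a i j = - a j i) /\
      (forall k, I (c k - \sum_(i < r) a k i * ulin B i)).

(* Ring isomorphism between a quotient R1/E1 and a subquotient D2/E2 of R2,
   expressed on representatives: f induces a well-defined, injective,
   surjective ring homomorphism R1/E1 -> D2/E2. *)
Definition subquot_ring_iso (R1 R2 : pzRingType)
    (E1 : R1 -> R1 -> Prop) (D2 : R2 -> Prop) (E2 : R2 -> R2 -> Prop) : Prop :=
  exists f : R1 -> R2,
    (forall x, D2 (f x)) /\
    (forall x y, E1 x y <-> E2 (f x) (f y)) /\
    (forall x y, E2 (f (x + y)) (f x + f y)) /\
    (forall x y, E2 (f (x * y)) (f x * f y)) /\
    E2 (f 1) 1 /\
    (forall y, D2 y -> exists x, E2 (f x) y).

Definition eqmod m (I : Poly m -> Prop) (p q : Poly m) : Prop := I (p - q).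

(* Tor_0^S(Poly m / I, Z) = (Poly m / I) / (u)(Poly m / I) = Poly m / (I + (u)) *)
Definition Tor0_ideal r m (B : 'M[int]_(r, m)) (I : Poly m -> Prop) : Poly m -> Prop :=
  ideal_add I (U_ideal B).

(* Connected sum A #^V_C B with A = Poly/IA, B = Poly/IB, C = Poly/IC,
   eps_A, eps_B induced by the identity (quotient maps), and V represented by
   the set Vrep of polynomials, iota_A, iota_B induced by the identity.
   Fibre product: pairs (a,b) with eps_A a = eps_B b. *)
Definition fiber_dom m (IC : Poly m -> Prop) (x : Poly m * Poly m) : Prop :=
  IC (x.1 - x.2).
(* (a,b) ~ (a',b') iff (a,b) - (a',b') = (iota_A v, iota_B v) for some v in V *)
Definition connsum_rel m (IA IB Vrep : Poly m -> Prop) (x y : Poly m * Poly m) : Prop :=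
  exists w, Vrep w /\ IA (x.1 - y.1 - w) /\ IB (x.2 - y.2 - w).

(* The diagonal x |-> (x, x) maps onto the
   fibre product because I_W = I_K1 + I_K2, and on the kernel side
   I_K = (x_sigma : sigma in Z) + I_L with I_L = I_K1 /\ I_K2.  The only
   non-formal step is (I_K1 + U) /\ (I_K2 + U) <= I_L + U for U = (u_1..u_r):
   if a1 + sum u_k c_k = a2 + sum u_k d_k, then c - d is a Koszul 1-cycle of
   Z[W]; as Tor_1 vanishes it is a boundary modulo I_W = I_K1 + I_K2, and
   splitting it along this sum moves a1 into both ideals at once. *)

From HB Require Import structures.
From mathcomp Require Import all_boot all_order all_algebra.
From mathcomp Require Import mpoly.
From mathcomp Require Import ring.
Import GRing.Theory Num.Theory.
Local Open Scope ring_scope.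
Set Implicit Arguments. Unset Strict Implicit.

Section SquareFreeMonomials.
Variable n : nat.
Implicit Types (t : {set 'I_n}) (mm : 'X_{1..n}) (p q : {mpoly int[n]}).

Definition mnm_supp mm : {set 'I_n} := [set i | 0 < mm i]%N.

Definition mnm_of_set t : 'X_{1..n} := (\sum_(i in t) U_(i))%MM.

Lemma mnm_of_setE t i : mnm_of_set t i = (i \in t).
Proof.
rewrite mnm_sumE (eq_bigr (fun j => nat_of_bool (j == i))) => [|j _]; last by rewrite mnm1E.
case: (boolP (i \in t)) => it; last first.
  by rewrite big1 // => j jt; case: eqP => // ji; rewrite -ji jt in it.
by rewrite (bigD1 i) //= eqxx big1 // => j /andP[_ /negbTE ->].
Qed.

Lemma xmonE t : xmon t = 'X_[mnm_of_set t].
Proof. by rewrite /xmon (big_morph _ (@mpolyXD _ _) (@mpolyX0 _ _)). Qed.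

Lemma lem_mnm_of_set t mm : (mnm_of_set t <= mm)%MM = (t \subset mnm_supp mm).
Proof.
apply/mnm_lepP/subsetP => [le_tm i it | sub_tm i].
  by have := le_tm i; rewrite mnm_of_setE it inE.
by rewrite mnm_of_setE; case: (boolP (i \in t)) => // /sub_tm; rewrite inE.
Qed.

Lemma mcoeffM_xmon_eq0 q t mm : ~~ (t \subset mnm_supp mm) -> (q * xmon t)@_mm = 0.
Proof.
rewrite -lem_mnm_of_set => le_tm; apply/eqP; apply: contraNT le_tm.
rewrite -mcoeff_msupp xmonE (perm_mem (msuppMX _ _)) => /mapP[m' _ ->].
exact: lem_addr.
Qed.

Lemma scaleX_xmon c t mm : t \subset mnm_supp mm ->
  c *: 'X_[mm] = (c *: 'X_[mm - mnm_of_set t]) * xmon t.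
Proof. by rewrite -lem_mnm_of_set xmonE -scalerAl -mpolyXD => /submK ->. Qed.

Definition mrestrict (Q : pred 'X_{1..n}) p : {mpoly int[n]} :=
  \sum_(mm <- msupp p | Q mm) p@_mm *: 'X_[mm].

Lemma mcoeff_mrestrict Q p mm : (mrestrict Q p)@_mm = if Q mm then p@_mm else 0.
Proof.
rewrite /mrestrict raddf_sum /=.
under eq_bigr do rewrite mcoeffZ mcoeffX mulr_natr mulrb.
rewrite -big_mkcondr -big_filter.
have [supp_mm|nsupp_mm] := boolP (mm \in msupp p); last first.
  rewrite (memN_msupp_eq0 nsupp_mm) if_same big1_seq // => m'.
  by rewrite mem_filter /= => /andP[/andP[_ /eqP ->]]; rewrite (negbTE nsupp_mm).
case: ifP => Qmm; last first.
  rewrite big1_seq // => m'; rewrite mem_filter /= => /andP[/andP[Qm' /eqP Em'] _].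
  by rewrite Em' Qmm in Qm'.
rewrite (@eq_filter _ _ (pred1 mm)) ?filter_pred1_uniq ?msupp_uniq ?big_seq1 //.
by move=> m' /=; case: eqP => [->|]; rewrite ?Qmm ?andbF.
Qed.

End SquareFreeMonomials.

Section IdealGen.
Variables (n : nat) (G : {mpoly int[n]} -> Prop).
Local Notation I := (ideal_gen G).

Lemma ideal_gen0 : I 0.
Proof. by exists [::]; rewrite big_nil; split. Qed.

Lemma ideal_genD p q : I p -> I q -> I (p + q).
Proof.
move=> [s1 [G_s1 ->]] [s2 [G_s2 ->]]; exists (s1 ++ s2); rewrite big_cat.
by split=> // c; rewrite mem_cat => /orP[/G_s1|/G_s2].
Qed.

Lemma ideal_genMl a p : I p -> I (a * p).
Proof.
move=> [s [G_s ->]]; exists [seq (a * c.1, c.2) | c <- s]; split.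
  by move=> _ /mapP[c s_c ->] /=; apply: G_s.
by rewrite big_map mulr_sumr; apply: eq_bigr => c _; rewrite mulrA.
Qed.

Lemma ideal_genN p : I p -> I (- p).
Proof. by rewrite -mulN1r; apply: ideal_genMl. Qed.

Lemma ideal_genB p q : I p -> I q -> I (p - q).
Proof. by move=> Ip Iq; apply: ideal_genD Ip (ideal_genN Iq). Qed.

Lemma ideal_gen_mem a g : G g -> I (a * g).
Proof.
by exists [:: (a, g)]; rewrite big_seq1; split=> // c; rewrite mem_seq1 => /eqP ->.
Qed.

Lemma ideal_gen_sum (T : eqType) (s : seq T) (P : pred T) (F : T -> {mpoly int[n]}) :
  (forall i, i \in s -> P i -> I (F i)) -> I (\sum_(i <- s | P i) F i).
Proof.
move=> IF; rewrite big_seq_cond; apply: big_ind => //; first exact: ideal_gen0.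
  exact: ideal_genD.
by move=> i /andP[]; apply: IF.
Qed.

End IdealGen.

Lemma ideal_add_gen0 n (G1 G2 : {mpoly int[n]} -> Prop) :
  ideal_add (ideal_gen G1) (ideal_gen G2) 0.
Proof. by exists 0, 0; rewrite addr0; do !split; apply: ideal_gen0. Qed.

Lemma ideal_add_genr n (G1 G2 : {mpoly int[n]} -> Prop) q :
  ideal_gen G2 q -> ideal_add (ideal_gen G1) (ideal_gen G2) q.
Proof. by exists 0, q; rewrite add0r; do !split=> //; apply: ideal_gen0. Qed.

Lemma ideal_gen_sub n (G1 G2 : {mpoly int[n]} -> Prop) p :
  (forall g, G1 g -> G2 g) -> ideal_gen G1 p -> ideal_gen G2 p.
Proof. by move=> G12 [s [G1s ->]]; exists s; split=> // c /G1s /G12. Qed.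

Lemma ideal_gen_or n (G1 G2 : {mpoly int[n]} -> Prop) p :
  ideal_gen (fun g => G1 g \/ G2 g) p <-> ideal_add (ideal_gen G1) (ideal_gen G2) p.
Proof.
split=> [[s [G_s ->]] | [a [b [Ia [Ib ->]]]]]; last first.
  apply: ideal_genD; first by apply: ideal_gen_sub Ia; left.
  by apply: ideal_gen_sub Ib; right.
elim: s G_s => [|c s IHs] G_s.
  by exists 0, 0; rewrite big_nil addr0; do !split; apply: ideal_gen0.
rewrite big_cons.
have [a [b [Ia [Ib ->]]]] := IHs (fun d s_d => G_s d (@mem_behead _ (c :: s) _ s_d)).
case: (G_s c (mem_head _ _)) => [G1c|G2c].
  exists (c.1 * c.2 + a), b; rewrite addrA; do !split => //.
  exact: ideal_genD (ideal_gen_mem _ G1c) Ia.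
exists a, (c.1 * c.2 + b); rewrite addrCA; do !split => //.
exact: ideal_genD (ideal_gen_mem _ G2c) Ib.
Qed.

Section MonomialIdeals.
Variables (n : nat) (P : {set 'I_n} -> Prop).
Local Notation I := (ideal_gen (fun q => exists s, P s /\ q = xmon s)).

Lemma mcoeff_xmon_ideal_eq0 p mm :
  I p -> (forall s, P s -> ~~ (s \subset mnm_supp mm)) -> p@_mm = 0.
Proof.
move=> [gs [P_gs ->]] not_dvd; rewrite raddf_sum big1_seq //= => c /P_gs[s [Ps ->]].
exact: mcoeffM_xmon_eq0 (not_dvd s Ps).
Qed.

Lemma xmon_ideal_mrestrict (Q : pred 'X_{1..n}) p :
  (forall mm, p@_mm != 0 -> Q mm -> exists2 t, P t & t \subset mnm_supp mm) ->
  I (mrestrict Q p).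
Proof.
move=> dvd; apply: ideal_gen_sum => mm; rewrite mcoeff_msupp => p_mm Qmm.
have [t Pt t_mm] := dvd mm p_mm Qmm.
by rewrite (scaleX_xmon _ t_mm); apply: ideal_gen_mem; exists t.
Qed.

End MonomialIdeals.

Section StanleyReisner.
Variable n : nat.
Implicit Types (K L Z : {set {set 'I_n}}) (p : {mpoly int[n]}).

Definition down_closed K := forall s t : {set 'I_n}, s \in K -> t \subset s -> t \in K.

Lemma down_closedU K1 K2 : down_closed K1 -> down_closed K2 -> down_closed (K1 :|: K2).
Proof.
move=> dc1 dc2 s t; rewrite !inE => /orP[] Ks ts; first by rewrite (dc1 s).
by rewrite (dc2 s) ?orbT.
Qed.

Lemma down_closed_Del Z L : down_closed L -> down_closed (Del Z L).
Proof.
move=> dcL s t; rewrite !inE => /andP[not_O Ls] ts; rewrite (dcL s) // andbT.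
apply: contra not_O => /existsP[u /andP[Zu ut]]; rewrite Ls /=.
by apply/existsP; exists u; rewrite Zu (subset_trans ut ts).
Qed.

Lemma SR_idealP K p : down_closed K ->
  SR_ideal K p <-> forall mm, mnm_supp mm \in K -> p@_mm = 0.
Proof.
move=> dcK; split=> [I_p mm K_mm | p_K].
  apply: mcoeff_xmon_ideal_eq0 I_p _ => s notK_s; apply: contra notK_s.
  exact: dcK.
have -> : p = mrestrict (fun mm => mnm_supp mm \notin K) p.
  apply/mpolyP => mm; rewrite mcoeff_mrestrict.
  by case: ifPn => // /negPn /p_K.
apply: xmon_ideal_mrestrict => mm _ notK_mm.
by exists (mnm_supp mm).
Qed.

Lemma SR_ideal_setI K1 K2 p :
  SR_ideal (K1 :&: K2) p <-> ideal_add (SR_ideal K1) (SR_ideal K2) p.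
Proof.
rewrite -ideal_gen_or; split; apply: ideal_gen_sub => g.
  by move=> [s [+ ->]]; rewrite inE negb_and => /orP[]; [left|right]; exists s.
by move=> [[s [notK_s ->]]|[s [notK_s ->]]]; exists s; rewrite inE negb_and notK_s ?orbT.
Qed.

Lemma SR_ideal_setU K1 K2 p : down_closed K1 -> down_closed K2 ->
  SR_ideal K1 p -> SR_ideal K2 p -> SR_ideal (K1 :|: K2) p.
Proof.
move=> dc1 dc2 /(SR_idealP _ dc1) p_K1 /(SR_idealP _ dc2) p_K2.
apply/(SR_idealP _ (down_closedU dc1 dc2)) => mm.
by rewrite inE => /orP[]; [exact: p_K1 | exact: p_K2].
Qed.

Lemma SR_ideal_Del_split Z L p : down_closed L ->
  SR_ideal (Del Z L) p -> ideal_add (mon_ideal Z) (SR_ideal L) p.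
Proof.
move=> dcL /(SR_idealP _ (down_closed_Del (Z := Z) dcL)) p_K.
exists (mrestrict (fun mm => mnm_supp mm \in L) p).
exists (mrestrict (fun mm => mnm_supp mm \notin L) p).
split; last split.
- apply: xmon_ideal_mrestrict => mm p_mm L_mm.
  have : mnm_supp mm \notin Del Z L by apply: contra p_mm => /p_K ->.
  by rewrite !inE L_mm andbT negbK => /existsP[t /andP[Zt t_mm]]; exists t.
- apply/(SR_idealP _ dcL) => mm L_mm.
  by rewrite mcoeff_mrestrict L_mm.
- apply/mpolyP => mm; rewrite mcoeffD !mcoeff_mrestrict.
  by case: (mnm_supp mm \in L); rewrite ?addr0 ?add0r.
Qed.

Lemma mon_ideal_sub_Del Z L p : Z \subset L -> mon_ideal Z p -> SR_ideal (Del Z L) p.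
Proof.
move=> ZL; apply: ideal_gen_sub => _ [s [Zs ->]]; exists s; split => //.
rewrite !inE negb_and negbK (subsetP ZL s Zs) /=.
by apply/orP; left; apply/existsP; exists s; rewrite Zs subxx.
Qed.

Lemma SR_ideal_sub_Del Z L p : SR_ideal L p -> SR_ideal (Del Z L) p.
Proof.
by apply: ideal_gen_sub => _ [s [notL_s ->]]; exists s; rewrite !inE negb_and notL_s orbT.
Qed.

End StanleyReisner.

Lemma antisym_form_eq0 n r (v : 'I_r -> {mpoly int[n]})
    (A : 'I_r -> 'I_r -> {mpoly int[n]}) :
  (forall i j, A i j = - A j i) -> \sum_k v k * \sum_i A k i * v i = 0.
Proof.
move=> A_anti; set S := \sum_k _.
have S_opp : S = - S.
  rewrite {1}/S (eq_bigr (fun k => \sum_i v k * (A k i * v i))) => [|k _]; last first.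
    by rewrite mulr_sumr.
  rewrite exchange_big -sumrN; apply: eq_bigr => i _.
  by rewrite mulr_sumr -sumrN; apply: eq_bigr => k _; rewrite A_anti; ring.
apply/mpolyP => mm; rewrite mcoeff0.
have : S@_mm *+ 2 = 0 by rewrite -mcoeffMn mulr2n {1}S_opp addNr mcoeff0.
by move/eqP; rewrite mulrn_eq0 => /eqP.
Qed.

Section KoszulTor1.
Variables (n r : nat) (B : 'M[int]_(r, n)).
Local Notation U := (U_ideal B).

Definition ulin_comb (c : 'I_r -> {mpoly int[n]}) := \sum_i ulin B i * c i.

Lemma ulin_combB c d : ulin_comb (fun i => c i - d i) = ulin_comb c - ulin_comb d.
Proof. by rewrite /ulin_comb -sumrB; apply: eq_bigr => i _; rewrite mulrBr. Qed.

Lemma U_idealP p : U p <-> exists c, p = ulin_comb c.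
Proof.
split=> [[s [U_s ->]] | [c ->]]; last first.
  by apply: ideal_gen_sum => i _ _; rewrite mulrC; apply: ideal_gen_mem; exists i.
elim: s U_s => [|g s IHs] U_s.
  by exists (fun=> 0); rewrite big_nil /ulin_comb big1 // => i _; rewrite mulr0.
rewrite big_cons; have [i ->] := U_s g (mem_head _ _).
have [c ->] := IHs (fun h s_h => U_s h (@mem_behead _ (g :: s) _ s_h)).
exists (fun j => c j + (if j == i then g.1 else 0)).
rewrite /ulin_comb (eq_bigr _ (fun j _ => mulrDr _ _ _)) big_split /= addrC.
congr (_ + _); rewrite (bigD1 i) //= eqxx big1 ?addr0 ?(mulrC g.1) //.
by move=> j /negbTE ->; rewrite mulr0.
Qed.

Lemma Tor1_vanishes_ext (I J : {mpoly int[n]} -> Prop) :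
  (forall p, I p <-> J p) -> Tor1_vanishes B I -> Tor1_vanishes B J.
Proof.
move=> IJ Tor c /IJ /Tor[A [A_anti I_c]]; exists A; split=> // k.
exact/IJ.
Qed.

Lemma ideal_add_meet_U (G1 G2 : {mpoly int[n]} -> Prop) v :
  Tor1_vanishes B (ideal_add (ideal_gen G1) (ideal_gen G2)) ->
  ideal_add (ideal_gen G1) U v -> ideal_add (ideal_gen G2) U v ->
  ideal_add (fun q => ideal_gen G1 q /\ ideal_gen G2 q) U v.
Proof.
move=> Tor [a1 [_ [I1a1 [/U_idealP[c ->] ->]]]] [a2 [_ [I2a2 [/U_idealP[d ->] E]]]].
have a2E : a2 = a1 + ulin_comb c - ulin_comb d by rewrite E addrK.
have cycle : ideal_add (ideal_gen G1) (ideal_gen G2) (ulin_comb (fun k => c k - d k)).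
  exists (- a1), a2; do !split; [exact: ideal_genN | exact: I2a2 |].
  by rewrite ulin_combB a2E; ring.
have [A [A_anti boundary]] := Tor _ cycle.
have /fin_all_exists[ef ef_split] : forall k,
    exists ef : {mpoly int[n]} * {mpoly int[n]},
      [/\ ideal_gen G1 ef.1, ideal_gen G2 ef.2 &
           c k - d k - \sum_i A k i * ulin B i = ef.1 + ef.2].
  by move=> k; have [e [f [I1e [I2f ->]]]] := boundary k; exists (e, f).
set e := fun k => (ef k).1; set f := fun k => (ef k).2.
have eE : ulin_comb e = ulin_comb c - ulin_comb d - ulin_comb f.
  transitivity (ulin_comb (fun k => (c k - d k - \sum_i A k i * ulin B i) - f k)).
    by apply: eq_bigr => k _; have [_ _ ->] := ef_split k; rewrite addrK.
  by rewrite !ulin_combB [X in _ - X - _]antisym_form_eq0 // subr0.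
exists (a1 + ulin_comb e), (ulin_comb (fun k => c k - e k)); do !split.
- apply: ideal_genD I1a1 _; apply: ideal_gen_sum => k _ _.
  by apply: ideal_genMl; have [] := ef_split k.
- have -> : a1 + ulin_comb e = a2 - ulin_comb f by rewrite eE a2E; ring.
  apply: ideal_genB I2a2 _; apply: ideal_gen_sum => k _ _.
  by apply: ideal_genMl; have [] := ef_split k.
- by apply/U_idealP; eexists.
- by rewrite ulin_combB; ring.
Qed.

End KoszulTor1.

Theorem lemma4p10 (m r : nat) (K1 K2 Z : {set {set 'I_m}}) (B : 'M[int]_(r, m)) :
  is_simplicial_complex K1 -> is_simplicial_complex K2 ->
  Z \subset (K1 :&: K2) ->
  set0 \notin Z ->
  Ostar (K1 :|: K2) Z \subset (K1 :&: K2) ->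
  \rank (map_mx (intr : int -> rat) B) = r ->
  let W := K1 :&: K2 in
  let L := K1 :|: K2 in
  let K := Del Z L in
  Tor1_vanishes B (SR_ideal K1) ->
  Tor1_vanishes B (SR_ideal K2) ->
  Tor1_vanishes B (SR_ideal K) ->
  Tor1_vanishes B (SR_ideal W) ->
  subquot_ring_iso
    (eqmod (Tor0_ideal B (SR_ideal K)))
    (fiber_dom (Tor0_ideal B (SR_ideal W)))
    (connsum_rel (Tor0_ideal B (SR_ideal K1)) (Tor0_ideal B (SR_ideal K2))
                 (ideal_add (mon_ideal Z) (SR_ideal L))).
Proof.
move=> [_ dc1] [_ dc2] ZW _ _ _ W L K _ _ _ Tor_W.
have Tor_sum := Tor1_vanishes_ext (fun p => SR_ideal_setI K1 K2 p) Tor_W.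
have ZL : Z \subset L := subset_trans ZW (subset_trans (subsetIl _ _) (subsetUl _ _)).
have rel_refl x : connsum_rel (Tor0_ideal B (SR_ideal K1)) (Tor0_ideal B (SR_ideal K2))
    (ideal_add (mon_ideal Z) (SR_ideal L)) x x.
  by exists 0; rewrite !subrr; do !split; apply: ideal_add_gen0.
exists (fun x => (x, x)); split; last split; last split; last split; last split.
- by move=> x; rewrite /fiber_dom subrr; apply: ideal_add_gen0.
- move=> x y; split=> [[k [u [Kk [Uu /= xyE]]]] | [_ [[z [l [Zz [Ll ->]]]] [Ixy1 Ixy2]]]].
  + exists k; rewrite /= xyE addrAC subrr add0r; do !split.
    * exact: SR_ideal_Del_split (down_closedU dc1 dc2) Kk.
    * exact: ideal_add_genr.
    * exact: ideal_add_genr.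
  + have [q [u [[K1q K2q] [Uu E]]]] := ideal_add_meet_U Tor_sum Ixy1 Ixy2.
    exists (z + l + q), u; do !split=> //;
      last by rewrite /= -addrA -E /= [RHS]addrC subrK.
    apply: ideal_genD; first apply: ideal_genD.
    * exact: mon_ideal_sub_Del.
    * exact: SR_ideal_sub_Del.
    * exact/SR_ideal_sub_Del/SR_ideal_setU.
- by move=> x y; apply: rel_refl.
- by move=> x y; apply: rel_refl.
- exact: rel_refl.
- move=> [a b] [pw [u [/SR_ideal_setI[p1 [p2 [K1p1 [K2p2 ->]]]] [Uu /= abE]]]].
  exists (a - p1 - u), 0; rewrite /= !subr0; do !split.
  + exact: ideal_add_gen0.
  + by exists (- p1), (- u); do !split; [apply: ideal_genN.. | ring].
  + by exists p2, 0; do !split=> //; [apply: ideal_gen0 | rewrite -[a](subrK b) abE; ring].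
Qed.
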